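(* Let $N\ge1$ and $0<s<1$. There exists a constant $C^*>0$ such that $$\mathfrak{p}_t(z)\ge C^*t^{-\frac{N}{2s}}\quad\text{for all } t>1 \text{ and all } z\in\mathbb{R}^N \text{ with } |z|\le t^{1/2}.$$
   Context: For $t>0$ let $\mathfrak{h}^{(s)}_t$ be the heat kernel of $-(-\Delta)^s$ on $\mathbb{R}^N$; it satisfies, for some constant $C_0\ge1$, $C_0^{-1}\min\{t^{-N/(2s)},t|x|^{-N-2s}\}\le\mathfrak{h}^{(s)}_t(x)\le C_0\min\{t^{-N/(2s)},t|x|^{-N-2s}\}$ for all $x\in\mathbb{R}^N$, $t>0$. The heat kernel of $-\mathcal{L}$, $\mathcal{L}=-\Delta+(-\Delta)^s$, is $\mathfrak{p}_t(z)=(4\pi t)^{-N/2}\int_{\mathbb{R}^N}e^{-|z-\xi|^2/(4t)}\mathfrak{h}^{(s)}_t(\xi)\,d\xi$. *)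

From HB Require Import structures.
From mathcomp Require Import all_boot all_order all_algebra.
From mathcomp Require Import all_classical all_reals all_analysis.
Set Implicit Arguments. Unset Strict Implicit. Unset Printing Implicit Defensive.
Import Order.TTheory GRing.Theory Num.Theory.
Local Open Scope ring_scope.

Definition sqnorm {R : realType} {N : nat} (x : N.-tuple R) : R :=
  \sum_(i < N) (tnth x i) ^+ 2.
Definition enorm {R : realType} {N : nat} (x : N.-tuple R) : R :=
  Num.sqrt (sqnorm x).
Definition sqdist {R : realType} {N : nat} (x y : N.-tuple R) : R :=
  \sum_(i < N) (tnth x i - tnth y i) ^+ 2.

(* Lebesgue integral over R^N of a function with values in \bar R, written as
   the iterated integral  \int dx_1 ... \int dx_N f(x_1,...,x_N)
   (Tonelli: equals the N-dimensional Lebesgue integral for nonnegative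
   measurable integrands). *)
Fixpoint integralRN {R : realType} (N : nat) :
    (N.-tuple R -> \bar R) -> \bar R :=
  match N return (N.-tuple R -> \bar R) -> \bar R with
  | 0 => fun f => f [tuple]
  | n.+1 => fun f =>
      (\int[@lebesgue_measure R]_(x in [set: R])
          integralRN (fun t : n.-tuple R => f [tuple of x :: t]))%E
  end.

(* The two-sided comparison function min{ t^{-N/(2s)}, t |x|^{-N-2s} };
   at x = 0 the second term is +infinity, so the min is t^{-N/(2s)}. *)
Definition frac_bound {R : realType} (N : nat) (s t : R) (x : N.-tuple R) : R :=
  if x == [tuple of nseq N 0] then t `^ (- (N%:R / (2 * s)))
  else Num.min (t `^ (- (N%:R / (2 * s))))
               (t * enorm x `^ (- (N%:R + 2 * s))).

Definition heat_p {R : realType} (N : nat) (h : R -> N.-tuple R -> R)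
    (t : R) (z : N.-tuple R) : \bar R :=
  ((4 * pi * t) `^ (- (N%:R / 2)))%:E *
  integralRN (fun xi : N.-tuple R =>
      (expR (- (sqdist z xi / (4 * t))) * h t xi)%:E).

Arguments frac_bound {R} N s t x.
Arguments heat_p {R} N h t z.

(* On the cube [-a, a]^N with a = sqrt t / N every point xi has |xi|^2 <= t/N <= t.
   For |z| <= sqrt t this gives |z - xi|^2 <= 2|z|^2 + 2|xi|^2 <= 4t, so the
   Gaussian factor is at least e^-1; and since t >= 1 >= s,
   t |xi|^(-N-2s) >= t^(1-(N+2s)/2) >= t^(-N/(2s)), so h_t(xi) >= t^(-N/(2s)) / C0.
   The volume (2 sqrt t / N)^N of the cube cancels the factor t^(-N/2) in
   (4 pi t)^(-N/2). *)

From HB Require Import structures.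
From mathcomp Require Import all_boot all_order all_algebra.
From mathcomp Require Import all_classical all_reals all_analysis.
From mathcomp Require Import ring lra.
Import Order.TTheory GRing.Theory Num.Theory.
Local Open Scope ring_scope.

Section integral_lower_bound.
Import HBNNSimple.
Local Open Scope ereal_scope.
Context {R : realType}.

(* Bounding from below by a simple function needs no measurability of [f]:
   the integral of a nonnegative function is a supremum over simple ones. *)
Lemma mul_measure_le_integral d (T : measurableType d)
    (mu : {measure set T -> \bar R}) (A : set T) (k : R) (f : T -> \bar R) :
  measurable A -> (0 <= k)%R -> (forall x, 0 <= f x) ->
  (forall x, A x -> k%:E <= f x) ->
  k%:E * mu A <= \int[mu]_x f x.
Proof.
move=> mA k0 f0 fA.
pose g := scale_nnsfun (indic_nnsfun R mA) k0.
have -> : k%:E * mu A = \int[mu]_x (g x)%:E.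
  rewrite /= (@integralZl_indic _ _ _ _ _ measurableT (fun _ => A)) //.
    by rewrite integral_indic // setIT.
  by move=> /lt_le_trans /(_ k0); rewrite ltxx.
rewrite integralT_nnsfun ge0_integralTE //.
apply: ereal_sup_ubound; exists g => // x /=.
rewrite /measurable_realfun.mindic indicE.
by case: (boolP (x \in A)) => [/set_mem/fA|_]; rewrite ?mulr1 ?mulr0.
Qed.

Lemma integralRN_ge0 n (f : n.-tuple R -> \bar R) :
  (forall x, 0 <= f x) -> 0 <= integralRN f.
Proof.
elim: n f => [|n IH] f f0 /=; first exact: f0.
by apply: integral_ge0 => x _; apply: IH.
Qed.

Lemma integralRN_ge_cube n (f : n.-tuple R -> \bar R) (a k : R) :
  (0 <= a)%R -> (0 <= k)%R -> (forall xi, 0 <= f xi) ->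
  (forall xi, (forall i, - a <= tnth xi i <= a)%R -> k%:E <= f xi) ->
  (k * (2 * a) ^+ n)%:E <= integralRN f.
Proof.
move=> a0; elim: n f k => [|n IH] f k k0 f0 fk /=.
  by rewrite expr0 mulr1; apply: fk => -[].
have -> : (k * (2 * a) ^+ n.+1)%:E =
    (k * (2 * a) ^+ n)%:E * lebesgue_measure [set` `[(- a)%R, a]].
  rewrite lebesgue_measure_itv /= lte_fin.
  case: ltP => [_|aN]; last first.
    have -> : a = 0%R by lra.
    by rewrite mule0 mulr0 expr0n mulr0.
  by rewrite -EFinD -EFinM opprK exprSr mulrA -mulr2n mulr_natl.
apply: mul_measure_le_integral => //.
- by rewrite mulr_ge0 // exprn_ge0 // mulr_ge0.
- by move=> x; apply: integralRN_ge0 => t.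
move=> x /=; rewrite in_itv /= => xa; apply: IH => // t tcube; apply: fk => i.
by case: (unliftP ord0 i) => [j ->|->]; rewrite ?tnthS ?tnth0.
Qed.

End integral_lower_bound.

Section euclidean.
Context {R : realType} {n : nat}.
Implicit Types x y : n.-tuple R.

Lemma sqnorm_ge0 x : 0 <= sqnorm x.
Proof. by apply: sumr_ge0 => i _; exact: sqr_ge0. Qed.

Lemma enorm_gt0 x : x != [tuple of nseq n 0] -> 0 < enorm x.
Proof.
apply: contraNT; rewrite /enorm sqrtr_gt0 lt_def sqnorm_ge0 andbT negbK.
rewrite psumr_eq0 => [/allP x0|i _]; last exact: sqr_ge0.
apply/eqP/eq_from_tnth => i; rewrite tnth_nseq.
by apply/eqP; rewrite -sqrf_eq0; exact: x0 (mem_index_enum _).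
Qed.

Lemma sqdist_le_sqnormD x y : sqdist x y <= 2 * sqnorm x + 2 * sqnorm y.
Proof.
rewrite /sqdist /sqnorm !mulr_sumr -big_split /=; apply: ler_sum => i _.
have := sqr_ge0 (tnth x i + tnth y i); rewrite !expr2; nra.
Qed.

Lemma sqnorm_le_cube (a : R) x :
  (forall i, - a <= tnth x i <= a) -> sqnorm x <= n%:R * a ^+ 2.
Proof.
move=> xa; rewrite mulr_natl -[X in _ *+ X]card_ord -sumr_const.
by apply: ler_sum => i _; have /andP[] := xa i; nra.
Qed.

Lemma enorm_le_sqrt (t : R) x : 0 <= t -> (enorm x <= Num.sqrt t) = (sqnorm x <= t).
Proof. by move=> t0; rewrite /enorm ler_sqrt. Qed.

Lemma sqnorm_le_in_cube (t : R) x : (0 < n)%N -> 0 <= t ->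
  (forall i, - (Num.sqrt t / n%:R) <= tnth x i <= Num.sqrt t / n%:R) -> sqnorm x <= t.
Proof.
move=> n0 t0 /sqnorm_le_cube /le_trans; apply.
have n_gt0 : 0 < n%:R :> R by rewrite ltr0n.
rewrite expr_div_n sqr_sqrtr //.
have -> : n%:R * (t / n%:R ^+ 2) = t / n%:R by field; rewrite gt_eqF.
by rewrite ler_pdivrMr // ler_peMr // ler1n.
Qed.

Lemma gauss_factor_ge (t : R) x y : 0 < t -> sqnorm x <= t -> sqnorm y <= t ->
  expR (-1) <= expR (- (sqdist x y / (4 * t))).
Proof.
move=> t0 xt yt; rewrite ler_expR lerN2 ler_pdivrMr ?mulr_gt0 // mul1r.
by apply: le_trans (sqdist_le_sqnormD x y) _; lra.
Qed.

End euclidean.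

Section comparison_function.
Context {R : realType} {N : nat} {s t : R}.

Lemma frac_bound_ge0 (x : N.-tuple R) : 0 < t -> 0 <= frac_bound N s t x.
Proof.
move=> t0; rewrite /frac_bound; case: ifP => _; first exact: powR_ge0.
by rewrite le_min powR_ge0 mulr_ge0 ?powR_ge0 ?ltW.
Qed.

Lemma frac_bound_in_ball (x : N.-tuple R) :
  0 < s <= 1 -> 1 <= t -> enorm x <= Num.sqrt t ->
  frac_bound N s t x = t `^ (- (N%:R / (2 * s))).
Proof.
move=> /andP[s0 s1] t1 xt; rewrite /frac_bound; case: eqP => // /eqP /enorm_gt0 x0.
have t0 : 0 < t by lra.
set q := N%:R + 2 * s; have q0 : 0 < q by rewrite /q ltr_wpDl ?ler0n ?mulr_gt0.
apply/min_idPl; have expo : - (N%:R / (2 * s)) <= 1 - q / 2.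
  have inv2 : 2^-1 <= (2 * s)^-1 by rewrite lef_pV2 ?posrE ?mulr_gt0 //; lra.
  have := ler_wpM2l (ler0n _ N) inv2; rewrite /q; lra.
apply: le_trans (ler_powR t1 expo) _.
rewrite powRD ?(gt_eqF t0) ?implybT // powRr1 ?(ltW t0) // ler_wpM2l ?(ltW t0) //.
rewrite -mulNr mulrC powRrM powR12_sqrt ?(ltW t0) //.
rewrite !powRN lef_pV2 ?posrE ?powR_gt0 ?x0 ?sqrtr_gt0 //.
by apply: ge0_ler_powR; rewrite ?nnegrE ?(ltW q0) ?(ltW x0) ?sqrtr_ge0.
Qed.

End comparison_function.

Lemma heat_integrand_ge {R : realType} N (s C0 t v : R) (z xi : N.-tuple R) :
  0 < s <= 1 -> 0 < C0 -> 1 <= t -> sqnorm z <= t -> sqnorm xi <= t ->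
  C0^-1 * frac_bound N s t xi <= v ->
  expR (-1) * (C0^-1 * t `^ (- (N%:R / (2 * s)))) <=
    expR (- (sqdist z xi / (4 * t))) * v.
Proof.
move=> s01 C0_gt0 t1 zt xit hv; have t0 : 0 < t by lra.
apply: ler_pM.
- exact: expR_ge0.
- by rewrite mulr_ge0 ?invr_ge0 ?powR_ge0 ?(ltW C0_gt0).
- exact: gauss_factor_ge.
by apply: le_trans hv; rewrite frac_bound_in_ball ?enorm_le_sqrt ?(ltW t0).
Qed.

Lemma powR_natr_half {R : realType} (t : R) n :
  0 <= t -> t `^ (n%:R / 2) = Num.sqrt t ^+ n.
Proof. by move=> t0; rewrite -powR12_sqrt // -powR_mulrn ?powR_ge0 // -powRrM mulrC. Qed.

Lemma heat_p_ge_cube {R : realType} N (h : R -> N.-tuple R -> R) t z (a k : R) :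
  0 < t -> 0 <= a -> 0 <= k -> (forall xi, 0 <= h t xi) ->
  (forall xi, (forall i, - a <= tnth xi i <= a) ->
     k <= expR (- (sqdist z xi / (4 * t))) * h t xi) ->
  (((4 * pi * t) `^ (- (N%:R / 2)) * (k * (2 * a) ^+ N))%:E <= heat_p N h t z)%E.
Proof.
move=> t0 a0 k0 h0 hk; rewrite /heat_p EFinM.
apply: lee_wpmul2l; first by rewrite lee_fin powR_ge0.
apply: (integralRN_ge_cube _ _ _ _ a0 k0) => xi; last by move=> /hk; rewrite lee_fin.
by rewrite lee_fin mulr_ge0 ?expR_ge0.
Qed.

Theorem lemma2p6 (R : realType) (N : nat) (s C0 : R)
  (h : R -> N.-tuple R -> R) :
  (0 < N)%N -> 0 < s -> s < 1 -> 1 <= C0 ->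
  (forall t : R, 0 < t -> measurable_fun [set: N.-tuple R] (h t)) ->
  (forall (t : R) (x : N.-tuple R), 0 < t ->
      C0^-1 * frac_bound N s t x <= h t x /\ h t x <= C0 * frac_bound N s t x) ->
  exists Cstar : R, 0 < Cstar /\
    forall (t : R) (z : N.-tuple R), 1 < t -> enorm z <= Num.sqrt t ->
      ((Cstar * t `^ (- (N%:R / (2 * s))))%:E <= heat_p N h t z)%E.
Proof.
move=> N0 s0 s1 C01 _ hb; have C0_gt0 : 0 < C0 by lra.
have N_gt0 : (0 : R) < N%:R by rewrite ltr0n.
have pi4_gt0 : 0 < 4 * pi :> R by rewrite mulr_gt0 ?pi_gt0.
exists (expR (-1) * C0^-1 * ((4 * pi) `^ (N%:R / 2))^-1 * (2 / N%:R) ^+ N); split.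
  by rewrite !mulr_gt0 ?expR_gt0 ?invr_gt0 ?powR_gt0 ?exprn_gt0 ?divr_gt0.
move=> t z t1; have t0 : 0 < t by lra.
rewrite enorm_le_sqrt ?(ltW t0) // => zt.
set T := t `^ _; set a := Num.sqrt t / N%:R; set k := expR (-1) * (C0^-1 * T).
have a_ge0 : 0 <= a by rewrite divr_ge0 ?sqrtr_ge0 ?ler0n.
have k_ge0 : 0 <= k by rewrite !mulr_ge0 ?expR_ge0 ?invr_ge0 ?powR_ge0 ?(ltW C0_gt0).
have h_ge0 (xi : N.-tuple R) : 0 <= h t xi.
  apply: le_trans (hb t xi t0).1.
  by rewrite mulr_ge0 ?invr_ge0 ?frac_bound_ge0 ?(ltW C0_gt0).
apply: le_trans (heat_p_ge_cube N h t z a k t0 a_ge0 k_ge0 h_ge0 _); last first.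
  move=> xi /(sqnorm_le_in_cube _ _ N0 (ltW t0)) xit.
  by apply: heat_integrand_ge (hb t xi t0).1; rewrite ?s0 ?(ltW s1) ?(ltW t1).
rewrite lee_fin le_eqVlt; apply/predU1P; left.
rewrite powRN (@powRM _ (4 * pi) t) ?(ltW pi4_gt0) ?(ltW t0) //.
rewrite (powR_natr_half t) ?(ltW t0) // /k /T /a !exprMn exprVn; field.
by rewrite !expf_neq0 ?gt_eqF ?sqrtr_gt0 ?powR_gt0.
Qed.
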